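(* Let $(T,f,(\le_h))$ be an ordered merge tree, let $\tau\colon[0,1]\to T$ be a partial in-order curve (in particular, any in-order curve) on $T$, and let $t_1\le t_2$ in $[0,1]$. Then $\tau(t)\in T_x$ for all $t\in[t_1,t_2]$, where $x=\mathrm{lca}(\tau(t_1),\tau(t_2))$.
   Context: A merge tree $(T,f)$: a finite rooted tree $T$ identified with its topological realisation (edges are copies of $[0,1]$), with a continuous $f\colon T\to\mathbb{R}\cup\{\infty\}$ strictly increasing towards the root, $f(v)=\infty$ iff $v$ is the root; lowest leaf at height $0$. $x_1\preceq x_2$ iff there is an $f$-increasing path from $x_1$ to $x_2$; $T_x$ is the subtree of descendants of $x$; $\mathrm{lca}$ the lowest common ancestor; $\mathrm{anc}_h(x)$ the unique ancestor of $x$ at height $h$; $\mathbb{L}_h=\{x:f(x)=h\}$. A layer-order is a family $(\le_h)_{h\ge0}$ of total orders on the $\mathbb{L}_h$ that is consistent ($h_1\le h_2$, $x_1\le_{h_1}x_2$ imply $\mathrm{anc}_{h_2}(x_1)\le_{h_2}\mathrm{anc}_{h_2}(x_2)$); $(T,f,(\le_h))$ is an ordered merge tree. For a curve $\sigma\colon[0,1]\to T$, the number of times $\sigma$ visits $x$ is the number of connected components of $\sigma^{-1}(x)$. $\deg(x)$ is the down-degree of $x$ ($1$ for edge-interior points, $0$ for leaves). For a vertex $v$ and a strict ancestor $x$ of $v$ on the parent edge of $v$ (possibly its upper endpoint), the planted subtree is $T_{x,v}=T_v\cup[x,v]$ with root $x$; it is $\sigma$-unvisited if all its points except possibly $x$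 are unvisited by $\sigma$; the $\sigma$-unvisited degree of $x$ is the number of $\sigma$-unvisited planted subtrees rooted at $x$. A curve $\tau\colon[0,1]\to T$ starting and ending at the root is a partial in-order curve if (1) for all $t_1,t_2$ with $f(\tau(t_1))=f(\tau(t_2))=h$ and $\tau(t_1)<_h\tau(t_2)$ we have $t_1<t_2$, and (2) each $x\in T$ is visited exactly $\deg(x)+1-\kappa$ times, where $\kappa$ is the $\tau$-unvisited degree of $x$. It is an in-order curve if moreover each $x$ is visited exactly $\deg(x)+1$ times. *)

From mathcomp Require Import all_boot.
From Stdlib Require Import Reals.
From Coquelicot Require Import Rbar.

Set Implicit Arguments.
Unset Strict Implicit.
Unset Printing Implicit Defensive.

(* Topological realisation of a finite rooted tree.
   Vertices: a finType V, root r, parent map par (par r = r; every vertex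
   reaches r by iterating par).  Edges: {v, par v} for v <> r, each a copy of
   [0,1] with 0 at v and 1 at par v.
   Points of the realisation are encoded canonically as pairs (v, s):
     - (v, 0)            is the vertex v,
     - (v, s), 0 < s < 1 is the interior point at parameter s on the edge
                          from v (s = 0) to par v (s = 1).       *)

Definition point (V : finType) := (V * R)%type.

Section MergeTree.
Variables (V : finType) (r : V) (par : V -> V).

Definition root_pt : point V := (r, 0%R).

Definition vanc (u w : V) : Prop := exists n, iter n par u = w.

Definition is_child (c w : V) : bool := (par c == w) && (c != w).

Definition is_leaf (v : V) : Prop := forall c, ~~ is_child c v.

Definition valid (x : point V) : Prop :=
  (x.1 = r /\ x.2 = 0%R) \/ (x.1 <> r /\ (0 <= x.2 < 1)%R).

(* x ⪯ y : y lies on the (f-increasing) path from x to the root *)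
Definition pre (x y : point V) : Prop :=
  (x.1 = y.1 /\ (x.2 <= y.2)%R) \/ (x.1 <> r /\ vanc (par x.1) y.1).

Definition in_subtree (x y : point V) : Prop := valid y /\ pre y x.

Definition is_lca (x1 x2 z : point V) : Prop :=
  valid z /\ pre x1 z /\ pre x2 z /\
  forall z', valid z' -> pre x1 z' -> pre x2 z' -> pre z z'.

(* Basic neighbourhoods of the realisation: [near x e] is the open ball of
   radius e around x for the path metric (edges of length 1) when e is small
   enough, and is always contained in that ball. *)
Definition near (x : point V) (e : R) (y : point V) : Prop :=
  ((0 < x.2)%R -> y.1 = x.1 /\ (Rabs (y.2 - x.2) < e)%R) /\
  (x.2 = 0%R -> (y.1 = x.1 /\ (y.2 < e)%R) \/ (is_child y.1 x.1 /\ (1 - e < y.2)%R)).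

Definition curve_cont (tau : R -> point V) : Prop :=
  forall t, (0 <= t <= 1)%R -> forall e, (0 < e)%R ->
  exists d, (0 < d)%R /\
    forall t', (0 <= t' <= 1)%R -> (Rabs (t' - t) < d)%R -> near (tau t) e (tau t').

Definition merge_tree (f : point V -> Rbar) : Prop :=
  par r = r /\ (forall v, vanc v r) /\
  f root_pt = p_infty /\
  (forall x, valid x -> x <> root_pt -> exists a, f x = Finite a) /\
  (forall x a, valid x -> f x = Finite a -> forall e, (0 < e)%R ->
     exists d, (0 < d)%R /\ forall y, valid y -> near x d y ->
       exists b, f y = Finite b /\ (Rabs (b - a) < e)%R) /\
  (forall M, exists d, (0 < d)%R /\ forall y, valid y -> near root_pt d y ->
       Rbar_lt (Finite M) (f y)) /\
  (forall x y, valid x -> valid y -> pre x y -> x <> y -> Rbar_lt (f x) (f y)) /\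
  (exists l, is_leaf l /\ f (l, 0%R) = Finite 0) /\
  (forall l, is_leaf l -> Rbar_le (Finite 0) (f (l, 0%R))).

Definition level (f : point V -> Rbar) (h : R) (x : point V) : Prop :=
  valid x /\ f x = Finite h.

Definition layer_order (f : point V -> Rbar) (le : R -> point V -> point V -> Prop) : Prop :=
  (forall h, (0 <= h)%R ->
     (forall x, level f h x -> le h x x) /\
     (forall x y, level f h x -> level f h y -> le h x y -> le h y x -> x = y) /\
     (forall x y z, level f h x -> level f h y -> level f h z ->
                    le h x y -> le h y z -> le h x z) /\
     (forall x y, level f h x -> level f h y -> le h x y \/ le h y x)) /\
  (forall h1 h2 x1 x2 y1 y2, (0 <= h1)%R -> (h1 <= h2)%R ->
     level f h1 x1 -> level f h1 x2 -> le h1 x1 x2 ->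
     level f h2 y1 -> pre x1 y1 -> level f h2 y2 -> pre x2 y2 ->
     le h2 y1 y2).

Definition deg (x : point V) : nat :=
  if Req_EM_T x.2 0%R then #|[set c | is_child c x.1]| else 1%nat.

Definition unvisited (sigma : R -> point V) (y : point V) : Prop :=
  forall t, (0 <= t <= 1)%R -> sigma t <> y.

(* the planted subtree T_{x,v}, with x = (v,s) if 0 < s < 1, and x = par v
   if s = 1, is sigma-unvisited: all its points other than x are unvisited. *)
Definition planted_unvisited (sigma : R -> point V) (v : V) (s : R) : Prop :=
  forall y, valid y -> ((y.1 = v /\ (y.2 < s)%R) \/ (y.1 <> v /\ vanc y.1 v)) ->
    unvisited sigma y.

Definition unvisited_degree (sigma : R -> point V) (x : point V) (k : nat) : Prop :=
  ((0 < x.2)%R ->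
     (planted_unvisited sigma x.1 x.2 /\ k = 1%nat) \/
     (~ planted_unvisited sigma x.1 x.2 /\ k = 0%nat)) /\
  (x.2 = 0%R ->
     exists S : {set V},
       (forall c, c \in S <-> (is_child c x.1 /\ planted_unvisited sigma c 1%R)) /\
       #|S| = k).

End MergeTree.

Definition same_comp (S : R -> Prop) (a b : R) : Prop :=
  forall t, (Rmin a b <= t <= Rmax a b)%R -> S t.

Definition ncomp (S : R -> Prop) (n : nat) : Prop :=
  exists p : nat -> R,
    (forall i, (i < n)%nat -> S (p i)) /\
    (forall i j, (i < j)%nat -> (j < n)%nat -> ~ same_comp S (p i) (p j)) /\
    (forall t, S t -> exists i, (i < n)%nat /\ same_comp S (p i) t).

Definition visits (V : finType) (sigma : R -> point V) (x : point V) (n : nat) : Prop :=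
  ncomp (fun t => (0 <= t <= 1)%R /\ sigma t = x) n.

Definition partial_in_order (V : finType) (r : V) (par : V -> V)
    (f : point V -> Rbar) (le : R -> point V -> point V -> Prop)
    (tau : R -> point V) : Prop :=
  (forall t, (0 <= t <= 1)%R -> valid r (tau t)) /\
  curve_cont par tau /\
  tau 0%R = root_pt r /\ tau 1%R = root_pt r /\
  (forall t1 t2 h, (0 <= t1 <= 1)%R -> (0 <= t2 <= 1)%R ->
     f (tau t1) = Finite h -> f (tau t2) = Finite h ->
     le h (tau t1) (tau t2) -> tau t1 <> tau t2 -> (t1 < t2)%R) /\
  (forall x k, valid r x -> unvisited_degree r par tau x k ->
     visits tau x (deg par x + 1 - k)%nat).

(* If x is the root there is nothing to prove. Otherwise T_x minus x is the
   disjoint union of the planted subtrees hanging below x (one per child if x is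
   a vertex, one if x is inside an edge), and membership in each of them, as in
   T_x itself, is locally constant away from x.  By connectedness of [0,1] the
   curve therefore visits x whenever it passes from one of these branches to
   another one or out of T_x.  If tau(t) left T_x for some t in [t1, t2], the
   times 0, t, 1 (outside T_x) together with one time in each of the
   deg x - kappa visited branches would be pairwise separated by visits of x;
   but deg x + 1 - kappa components of tau^-1(x) separate at most
   deg x + 2 - kappa points. *)

From Pilot Require Import Defs.
From mathcomp Require Import all_boot zify.
From Stdlib Require Import Reals Lra.
From Coquelicot Require Import Rbar.
From mathcomp Require Import boolp.

Set Implicit Arguments.
Unset Strict Implicit.
Unset Printing Implicit Defensive.

Local Open Scope R_scope.

Definition between (a b u : R) : Prop := Rmin a b <= u <= Rmax a b.

Lemma between_sym a b u : between a b u -> between b a u.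
Proof. by rewrite /between Rmin_comm Rmax_comm. Qed.

Lemma between_l a b : between a b a.
Proof. rewrite /between /Rmin /Rmax; case: Rle_dec; lra. Qed.

Lemma betweenE a b u : a <= b -> between a b u <-> a <= u <= b.
Proof. by move=> ab; rewrite /between Rmin_left ?Rmax_right. Qed.

Lemma between_unit a b u :
  0 <= a <= 1 -> 0 <= b <= 1 -> between a b u -> 0 <= u <= 1.
Proof. rewrite /between /Rmin /Rmax; case: Rle_dec; lra. Qed.

Lemma locally_constant_segment (Q : R -> Prop) a b : a <= b ->
  (forall u, a <= u <= b -> exists2 d, 0 < d &
     forall v, a <= v <= b -> Rabs (v - u) < d -> (Q v <-> Q u)) ->
  Q a -> Q b.
Proof.
move=> ab Qloc Qa.
pose E u := a <= u <= b /\ forall v, a <= v <= u -> Q v.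
have Ea : E a by split=> [|v v_a]; [lra | have -> : v = a by lra].
have E_bound : bound E by exists b => u [[]].
have [m [m_ub m_lub]] := completeness E E_bound (ex_intro _ a Ea).
have am : a <= m by exact: m_ub.
have mb : m <= b by apply: m_lub => u [[]].
have [d d_gt0 Qd] := Qloc m (conj am mb).
have below v : a <= v < m -> exists2 u, E u & v < u.
  move=> v_am; apply: contrapT => no_u; suff : m <= v by lra.
  by apply: m_lub => u Eu; apply: Rnot_lt_le => vu; apply: no_u; exists u.
have Qm : Q m.
  case: (Req_dec a m) => [<- // | a_m].
  have v_lt_m : Rmax a (m - d / 2) < m by apply: Rmax_lub_lt; lra.
  have [u Eu vu] := below _ (conj (Rmax_l _ _) v_lt_m).
  have um : u <= m by exact: m_ub.
  have [[au _] Qu] := Eu.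
  have v_le := Rmax_r a (m - d / 2).
  have Qu' : Q u by apply: Qu; lra.
  by apply/(Qd u ltac:(lra) ltac:(rewrite Rabs_left1; lra)).
have Em : E m.
  split=> [|v v_am]; first lra.
  case: (Req_dec v m) => [-> // | vm].
  by have [u [_ Qu] vu] := below v ltac:(lra); apply: Qu; lra.
case: (Req_dec m b) => [<- // | mb'].
have m_lt : m < Rmin b (m + d / 2) by apply: Rmin_glb_lt; lra.
suff /m_ub : E (Rmin b (m + d / 2)) by lra.
have m'_b := Rmin_l b (m + d / 2); have m'_md := Rmin_r b (m + d / 2).
split=> [|v v_a]; first lra.
case: (Rle_dec v m) => vm; first by apply: Em.2; lra.
by apply/(Qd v ltac:(lra) ltac:(rewrite Rabs_right; lra)).
Qed.

Lemma locally_constant_between (Q : R -> Prop) a b :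
  (forall u, between a b u -> exists2 d, 0 < d &
     forall v, between a b v -> Rabs (v - u) < d -> (Q v <-> Q u)) ->
  Q a -> Q b.
Proof.
have loc_le (P : R -> Prop) c e : c <= e ->
    (forall u, between c e u -> exists2 d, 0 < d &
       forall v, between c e v -> Rabs (v - u) < d -> (P v <-> P u)) ->
    P c -> P e.
  move=> ce Ploc; apply: locally_constant_segment => // u /(betweenE u ce) cue.
  have [d d_gt0 Pd] := Ploc u cue.
  by exists d => // v /(betweenE v ce) /Pd.
move=> Qloc Qa; case: (Rle_dec a b) => ab; first exact: loc_le Qloc Qa.
apply: contrapT => nQb.
have ba : b <= a by lra.
apply: (loc_le (fun u => ~ Q u) b a ba _ nQb) Qa => u /between_sym /Qloc [d d_gt0 Qd].
by exists d => // v /between_sym /Qd Qvu /Qvu; tauto.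
Qed.

Lemma forall_I3 (P : R -> Prop) a b c :
  P a -> P b -> P c -> forall k : 'I_3, P (nth 0 [:: a; b; c] k).
Proof. by move=> Pa Pb Pc [[|[|[|k]]] //]. Qed.

Lemma card_separated_le (X : R -> Prop) n (I : finType) (q : I -> R) :
  ncomp X n -> (forall i, ~ X (q i)) ->
  (forall i j, i != j -> exists2 u, X u & between (q i) (q j) u) ->
  (#|I| <= n.+1)%nat.
Proof.
move=> [p [_ [_ p_cover]]] qX q_sep.
(* The number of component representatives below q i separates the q i. *)
pose rank a := #|[set k : 'I_n | `[< p k < a >]]|.
have rank_lt a b : ~ X a -> ~ X b -> a < b ->
    (exists2 u, X u & between a b u) -> (rank a < rank b)%nat.
  move=> Xa Xb ab [u Xu /(betweenE u (Rlt_le _ _ ab)) abu].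
  have [k [kn pku]] := p_cover u Xu.
  have a_pk : a < p k.
    apply: Rnot_le_lt => pka; apply: Xa; apply: pku.
    rewrite /between /Rmin /Rmax; case: Rle_dec; lra.
  have pk_b : p k < b.
    apply: Rnot_le_lt => bpk; apply: Xb; apply: pku.
    rewrite /between /Rmin /Rmax; case: Rle_dec; lra.
  apply: proper_card; apply/properP; split.
    by apply/subsetP => i; rewrite !inE => /asboolP pia; apply/asboolP; lra.
  exists (Ordinal kn); rewrite !inE; first exact/asboolP.
  by apply/negP => /asboolP /=; lra.
have rank_bound i : (rank (q i) < n.+1)%nat.
  by rewrite ltnS -[X in (_ <= X)%nat]card_ord max_card.
suff /leq_card : injective (fun i => Ordinal (rank_bound i)) by rewrite card_ord.
move=> i j [rank_ij]; case: (eqVneq i j) => // ij.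
have [u Xu qu] := q_sep i j ij.
case: (Rtotal_order (q i) (q j)) => [qij | [qij | qij]].
- by have := rank_lt _ _ (qX i) (qX j) qij (ex_intro2 _ _ u Xu qu); rewrite rank_ij ltnn.
- move: qu; rewrite -qij /between Rmin_left ?Rmax_left; try lra.
  move=> qiu; have qi_u : q i = u by lra.
  by case: (qX i); rewrite qi_u.
- have qu' := between_sym qu.
  by have := rank_lt _ _ (qX j) (qX i) qij (ex_intro2 _ _ u Xu qu'); rewrite rank_ij ltnn.
Qed.

Definition locally_constant_off (V : finType) (r : V) (par : V -> V)
    (P : point V -> Prop) (x : point V) : Prop :=
  forall y, valid r y -> y <> x -> exists2 e, 0 < e &
    forall z, valid r z -> near par y e z -> (P z <-> P y).

Lemma curve_meets (V : finType) (r : V) (par : V -> V) (tau : R -> point V)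
    (P : point V -> Prop) (x : point V) a b :
  (forall t, 0 <= t <= 1 -> valid r (tau t)) -> curve_cont par tau ->
  locally_constant_off r par P x -> 0 <= a <= 1 -> 0 <= b <= 1 ->
  P (tau a) -> ~ P (tau b) -> exists2 u, between a b u & tau u = x.
Proof.
move=> tau_valid tau_cont Ploc a01 b01 Pa nPb; apply: contrapT => no_hit.
apply/nPb/(locally_constant_between (Q := fun u => P (tau u)) _ Pa) => u abu.
have u01 := between_unit a01 b01 abu.
have tau_u : tau u <> x by move=> tux; apply: no_hit; exists u.
have [e e_gt0 Pe] := Ploc _ (tau_valid u u01) tau_u.
have [d [d_gt0 near_d]] := tau_cont u u01 e e_gt0.
exists d => // v abv vu; have v01 := between_unit a01 b01 abv.
exact: Pe (tau_valid v v01) (near_d v v01 vu).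
Qed.

Section PlantedSubtrees.
Variables (V : finType) (r : V) (par : V -> V).

Definition in_planted (c : V) (s : R) (y : point V) : Prop :=
  (y.1 = c /\ y.2 < s) \/ (y.1 <> c /\ vanc par y.1 c).

Lemma in_planted_vanc c s y : in_planted c s y -> vanc par y.1 c.
Proof. by case=> [[-> _] | [_ yc]] //; exists 0%nat. Qed.

Lemma in_planted_off c s v a : v <> c -> in_planted c s (v, a) <-> vanc par v c.
Proof. by move=> vc; split=> [/in_planted_vanc // | ?]; right. Qed.

Lemma in_planted_on c s a : in_planted c s (c, a) <-> a < s.
Proof. by split=> [[[_ //] | [] //] | ?]; left. Qed.

Lemma in_planted_below c s v a : a < s -> in_planted c s (v, a) <-> vanc par v c.
Proof.
move=> a_s; case: (pselect (v = c)) => [-> | vc]; last exact: in_planted_off.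
by split=> _; [exists 0%nat | left].
Qed.

Definition unvisited_branches (sigma : R -> point V) (D : {set V}) (s : R) : {set V} :=
  [set c in D | `[< planted_unvisited r par sigma c s >]].

Lemma planted_visited (sigma : R -> point V) c s :
  ~ planted_unvisited r par sigma c s ->
  exists2 w, 0 <= w <= 1 & in_planted c s (sigma w).
Proof.
move=> visited; apply: contrapT => none; apply: visited => y _ cy t t01 ty.
by apply: none; exists t; rewrite // ty.
Qed.

Lemma vanc_par_iff v c : v <> c -> vanc par v c <-> vanc par (par v) c.
Proof.
move=> vc; split=> [[[|n] vn] | [n vn]]; first by case: vc.
  by exists n; rewrite -iterSr.
by exists n.+1; rewrite iterSr.
Qed.

Lemma pre_refl x : Defs.pre r par x x.
Proof. by left; split=> //; apply: Rle_refl. Qed.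

Lemma pre_root_l x : valid r x -> Defs.pre r par (root_pt r) x -> x = root_pt r.
Proof.
case: x => v a [[/= -> -> //] | [/= vr _]].
by case=> /= [[rv _] | [rr _]]; [case: vr | case: rr].
Qed.

Hypothesis par_root : par r = r.
Hypothesis vanc_root : forall v, vanc par v r.

Lemma pre_root y : valid r y -> Defs.pre r par y (root_pt r).
Proof.
by case: y => v a [[/= -> ->] | [/= vr _]]; [left; split=> //; apply: Rle_refl | right].
Qed.

Lemma iter_par_root n : iter n par r = r.
Proof. by elim: n => //= n ->. Qed.

Lemma periodic_root v n : iter n.+1 par v = v -> v = r.
Proof.
move=> per; have [m vm] := vanc_root v.
have iter_per k : iter (k * n.+1) par v = v.
  by elim: k => // k IH; rewrite mulSn iterD IH per.
by rewrite -(iter_per m) -(subnK (leq_pmulr m (ltn0Sn n))) iterD vm iter_par_root.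
Qed.

Lemma par_fixed_root v : par v = v -> v = r.
Proof. exact: (@periodic_root v 0). Qed.

Lemma not_vanc_par c : par c <> c -> ~ vanc par (par c) c.
Proof.
move=> pc [n cn]; apply: pc; rewrite (@periodic_root c n) ?par_root //.
by rewrite iterSr.
Qed.

Lemma vanc_strict v c : v <> c -> vanc par v c -> v <> r /\ vanc par (par v) c.
Proof.
move=> vc vcanc; split; last exact: (vanc_par_iff vc).1.
by move=> vr; have [n] := vcanc; rewrite vr iter_par_root => rc; apply: vc; rewrite vr.
Qed.

Lemma vanc_children_eq w c c' y : par c = w -> par c' = w -> c <> w -> c' <> w ->
  vanc par y c -> vanc par y c' -> c = c'.
Proof.
move=> cw c'w c_w c'_w [n yc] [m yc'].
wlog nm : n m c c' cw c'w c_w c'_w yc yc' / (n <= m)%nat.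
  move=> W; case: (leqP n m) => [nm | /ltnW mn]; first exact: W yc yc' nm.
  by symmetry; apply: W yc' yc mn.
have : iter (m - n) par c = c' by rewrite -yc -iterD subnK.
case: (m - n)%nat => [// | k] ck.
have wr : w = r by apply: (@periodic_root w k); rewrite -{1}cw -iterSr iterS ck c'w.
by case: c'_w; rewrite -ck iterSr cw wr iter_par_root.
Qed.

Lemma in_planted_near_vertex c s v : 0 < s <= 1 -> par c <> c ->
  (s = 1 -> v <> par c) ->
  exists2 e, 0 < e & forall z, valid r z -> near par (v, 0) e z ->
    (in_planted c s z <-> in_planted c s (v, 0)).
Proof.
move=> s01 pc v_pc.
have [e e_gt0 e_s] : exists2 e, 0 < e & s < 1 -> e <= s /\ e <= 1 - s.
  case: (Rlt_le_dec s 1) => s1; last by exists 1 => //; lra.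
  exists (Rmin s (1 - s)) => [|_]; first by apply: Rmin_glb_lt; lra.
  by split; [apply: Rmin_l | apply: Rmin_r].
exists e => // [[w b]] z_valid [_ /(_ erefl) /= near_v].
have b1 : b < 1 by case: z_valid => /= [[_ ->] | [_]]; lra.
rewrite (in_planted_below _ _ (proj1 s01)).
case: near_v => [[-> b_e] | [/andP [/eqP wv /eqP w_v] b_e]].
  apply: in_planted_below; case: (Rle_lt_or_eq_dec _ _ (proj2 s01)) => s1; last lra.
  by have := e_s s1; lra.
case: (pselect (w = c)) => [wc | wc].
  subst w; split=> [/in_planted_on bs | /=]; last by rewrite -wv => /(not_vanc_par pc).
  case: (Rle_lt_or_eq_dec _ _ (proj2 s01)) => s1; first by have := e_s s1; lra.
  by case: (v_pc s1).
by rewrite in_planted_off // -wv; apply: vanc_par_iff.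
Qed.

Lemma in_planted_near_interior c s v a : 0 < a -> (v = c -> a <> s) ->
  exists2 e, 0 < e & forall z, valid r z -> near par (v, a) e z ->
    (in_planted c s z <-> in_planted c s (v, a)).
Proof.
move=> a_gt0 a_s; case: (pselect (v = c)) => [vc | vc]; last first.
  exists 1 => [|[w b] _ [/(_ a_gt0) /= [-> _] _]]; first lra.
  by rewrite !in_planted_off.
subst v; exists (Rabs (a - s)) => [|[w b] _ [/(_ a_gt0) /= [-> ba] _]].
  by apply: Rabs_pos_lt; have := a_s erefl; lra.
rewrite !in_planted_on; move: ba; case: (Rlt_le_dec a s) => a_s'.
  by rewrite (Rabs_left (a - s)); [move/Rabs_def2; split=> ?; lra | lra].
rewrite (Rabs_right (a - s)); last lra.
by have := a_s erefl; move=> ? /Rabs_def2; split=> ?; lra.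
Qed.

Lemma in_planted_locally_constant c s x : 0 < s <= 1 -> par c <> c ->
  (s < 1 -> x = (c, s)) -> (s = 1 -> x = (par c, 0)) ->
  locally_constant_off r par (in_planted c s) x.
Proof.
move=> s01 pc x_lt x_eq [v a] y_valid yx.
have a01 : 0 <= a < 1 by case: y_valid => /= [[_ ->] | [_]]; lra.
case: (Req_dec a 0) => [a0 | a0].
  by subst a; apply: in_planted_near_vertex => // s1 vpc; apply: yx; rewrite x_eq // vpc.
apply: in_planted_near_interior => [|vc a_s]; first lra.
by apply: yx; rewrite vc a_s x_lt //; lra.
Qed.

Definition planted_decomposition (x : point V) (D : {set V}) (s : R) : Prop :=
  [/\ forall c y, c \in D -> valid r y -> in_planted c s y -> Defs.pre r par y x,
      forall y, valid r y -> Defs.pre r par y x -> y <> x ->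
        exists2 c, c \in D & in_planted c s y,
      forall c c' y, c \in D -> c' \in D ->
        in_planted c s y -> in_planted c' s y -> c = c',
      forall c, c \in D -> ~ in_planted c s x &
      forall c, c \in D -> locally_constant_off r par (in_planted c s) x].

Lemma children_decomposition v : v <> r ->
  planted_decomposition (v, 0) [set c | is_child par c v] 1.
Proof.
move=> vr; have pv : par v <> v by move/par_fixed_root.
have childP c : c \in [set c | is_child par c v] -> par c = v /\ c <> v.
  by rewrite inE => /andP [/eqP ? /eqP ?].
split.
- move=> c [w b] /childP [cv c_v] _ /in_planted_vanc /= wc; right.
  apply: vanc_strict; last by have [n wn] := wc; exists n.+1; rewrite iterS wn.
  move=> /= wv; apply: (@not_vanc_par c); rewrite cv; first exact: not_eq_sym.
  by rewrite -wv.
- move=> [w b] y_valid [[/= -> b0] | [/= wr [n wn]]] yx.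
    case: yx; case: y_valid => /= [[_ b0'] | [_ b01]]; rewrite ?b0' //.
    by congr pair; lra.
  exists (iter n par w).
    rewrite inE /is_child -iterS iterSr wn eqxx /=; apply/eqP => nv.
    by apply: pv; rewrite -{1}nv -iterS iterSr wn.
  have b1 : b < 1 by case: y_valid => /= [[] | [_]] //; lra.
  case: (pselect (w = iter n par w)) => [wn' | wn']; first by left.
  by right; split=> //; exists n.
- move=> c c' y /childP [cv c_v] /childP [c'v c'_v].
  move=> /in_planted_vanc yc /in_planted_vanc yc'.
  exact: vanc_children_eq cv c'v c_v c'_v yc yc'.
- move=> c /childP [cv c_v]; rewrite in_planted_below; last lra.
  by rewrite -cv; apply: not_vanc_par; rewrite cv; exact: not_eq_sym.
- move=> c /childP [cv c_v]; apply: in_planted_locally_constant; try lra.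
    by rewrite cv; exact: not_eq_sym.
  by rewrite cv.
Qed.

Lemma edge_decomposition v s : v <> r -> 0 < s < 1 ->
  planted_decomposition (v, s) [set v] s.
Proof.
move=> vr s01; have pv : par v <> v by move/par_fixed_root.
split.
- move=> c [w b] /set1P -> _ [[/= -> bs] | [/= wv wvanc]].
    by left; split=> //=; lra.
  by right; apply: vanc_strict.
- move=> [w b] y_valid [[/= -> bs] | [/= wr wvanc]] yx; exists v; rewrite ?inE //.
    left; split=> //=; case: (Rle_lt_or_eq_dec _ _ bs) => // b_s.
    by case: yx; rewrite b_s.
  case: (pselect (w = v)) => [wv | wv].
    by case: (not_vanc_par pv); rewrite -{1}wv.
  by right; split=> //; apply/vanc_par_iff.
- by move=> c c' y /set1P -> /set1P ->.
- by move=> c /set1P -> /in_planted_on /=; lra.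
- by move=> c /set1P ->; apply: in_planted_locally_constant => //; lra.
Qed.

Lemma point_decomposition (tau : R -> point V) x : valid r x -> x <> root_pt r ->
  exists D s, [/\ planted_decomposition x D s, deg par x = #|D| &
    unvisited_degree r par tau x #|unvisited_branches tau D s|].
Proof.
case: x => v a x_valid x_root.
have [vr a01] : v <> r /\ 0 <= a < 1.
  by case: x_valid => /= [[vr a0] | [vr a01]]; [case: x_root; rewrite vr a0 | ].
case: (Rle_lt_or_eq_dec _ _ (proj1 a01)) => [a_pos | <-]; last first.
  exists [set c | is_child par c v], 1; split.
  - exact: children_decomposition.
  - by rewrite /deg /=; case: Req_EM_T.
  - split=> /= [|_]; first lra.
    exists (unvisited_branches tau [set c | is_child par c v] 1); split=> //.
    by move=> c; rewrite !inE; split=> [/andP [-> /asboolP] | [-> /asboolP ->]].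
exists [set v], a; split.
- exact: edge_decomposition vr (conj a_pos (proj2 a01)).
- by rewrite /deg cards1 /=; case: Req_EM_T => // a0; exfalso; lra.
- split=> /= [_ | a0]; last lra.
  have -> : unvisited_branches tau [set v] a =
      [set c in [set v] | `[< planted_unvisited r par tau v a >]].
    by apply/setP => c; rewrite !inE; case: eqP => // ->.
  case: asboolP => pu; [left | right]; split=> //.
    by rewrite -(cards1 v); apply: eq_card => c; rewrite !inE andbT.
  by rewrite -(cards0 V); apply: eq_card => c; rewrite !inE andbF.
Qed.

End PlantedSubtrees.

Section VisitCounting.
Variables (V : finType) (r : V) (par : V -> V) (tau : R -> point V).
Variables (x : point V) (D : {set V}) (s : R).
Hypothesis tau_valid : forall t, 0 <= t <= 1 -> valid r (tau t).
Hypothesis tau_cont : curve_cont par tau.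
Hypothesis x_decomp : planted_decomposition r par x D s.

Let hits u := 0 <= u <= 1 /\ tau u = x.
Let K := unvisited_branches r par tau D s.

Lemma hits_leaving_branch c a b : c \in D -> 0 <= a <= 1 -> 0 <= b <= 1 ->
  in_planted par c s (tau a) -> ~ in_planted par c s (tau b) ->
  exists2 u, hits u & between a b u.
Proof.
move=> cD a01 b01 ca cb; have [_ _ _ _ loc] := x_decomp.
have [u abu tau_u] := curve_meets tau_valid tau_cont (loc c cD) a01 b01 ca cb.
by exists u => //; split=> //; apply: between_unit abu.
Qed.

Lemma hits_branch_outside c a b : c \in D -> 0 <= a <= 1 -> 0 <= b <= 1 ->
  in_planted par c s (tau a) -> ~ Defs.pre r par (tau b) x ->
  exists2 u, hits u & between a b u.
Proof.
move=> cD a01 b01 ca above_b; apply: hits_leaving_branch ca _ => // cb.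
by have [below _ _ _ _] := x_decomp; apply/above_b/(below c _ cD (tau_valid b01)).
Qed.

Lemma hits_branches c c' a b : c \in D -> c' \in D -> c <> c' ->
  0 <= a <= 1 -> 0 <= b <= 1 ->
  in_planted par c s (tau a) -> in_planted par c' s (tau b) ->
  exists2 u, hits u & between a b u.
Proof.
move=> cD c'D cc' a01 b01 ca c'b; apply: hits_leaving_branch ca _ => // cb.
by have [_ _ disj _ _] := x_decomp; apply/cc'/(disj _ _ _ cD c'D cb c'b).
Qed.

Lemma hits_below_outside a b : 0 <= a <= 1 -> 0 <= b <= 1 ->
  Defs.pre r par (tau a) x -> ~ Defs.pre r par (tau b) x ->
  exists2 u, hits u & between a b u.
Proof.
move=> a01 b01 below_a above_b.
case: (pselect (tau a = x)) => [tau_a | tau_a].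
  by exists a; [split | apply: between_l].
have [_ cover _ _ _] := x_decomp.
have [c cD ca] := cover _ (tau_valid a01) below_a tau_a.
exact: hits_branch_outside cD a01 b01 ca above_b.
Qed.

Lemma branch_times : exists w : {c | c \in D :\: K} -> R,
  forall c, 0 <= w c <= 1 /\ in_planted par (val c) s (tau (w c)).
Proof.
have branch_time (c : {c | c \in D :\: K}) :
    exists w, 0 <= w <= 1 /\ in_planted par (val c) s (tau w).
  have := valP c; rewrite !inE => /andP [cK cD].
  have visited : ~ planted_unvisited r par tau (val c) s.
    by move: cK; rewrite cD; case: asboolP.
  by have [w w01 cw] := planted_visited visited; exists w.
by have [w w_spec] := choice branch_time; exists w.
Qed.

Lemma outside_times_separated t1 t2 t : 0 <= t1 -> t1 <= t <= t2 -> t2 <= 1 ->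
  Defs.pre r par (tau t1) x -> Defs.pre r par (tau t2) x -> ~ Defs.pre r par (tau t) x ->
  forall k k' : 'I_3, k != k' ->
  exists2 u, hits u & between (nth 0 [:: 0; t; 1] k) (nth 0 [:: 0; t; 1] k') u.
Proof.
move=> t1_ge0 [t1t tt2] t2_le1 below1 below2 above.
have t01 : 0 <= t <= 1 by lra.
have [u1 hit1 /(betweenE u1 t1t) u1t] :=
  hits_below_outside (conj t1_ge0 (Rle_trans _ _ _ t1t t01.2)) t01 below1 above.
have [u2 hit2 /between_sym /(betweenE u2 tt2) u2t] :=
  hits_below_outside (conj (Rle_trans _ _ _ t01.1 tt2) t2_le1) t01 below2 above.
have sep (k k' : 'I_3) : (k < k')%nat ->
    exists2 u, hits u & between (nth 0 [:: 0; t; 1] k) (nth 0 [:: 0; t; 1] k') u.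
  case: k k' => m m3 [m' m'3] /=.
  case: m m3 => [|[|[|m]]] // _; case: m' m'3 => [|[|[|m']]] //= _ _.
  - by exists u1 => //; apply/betweenE; lra.
  - by exists u1 => //; apply/betweenE; lra.
  - by exists u2 => //; apply/betweenE; lra.
move=> k k' kk'; case: (ltngtP k k') => [lt_kk' | lt_k'k | /val_inj eq_kk'].
- exact: sep.
- by have [u ? ?] := sep _ _ lt_k'k; exists u => //; apply: between_sym.
- by rewrite eq_kk' eqxx in kk'.
Qed.

Hypothesis tau0 : tau 0 = root_pt r.
Hypothesis tau1 : tau 1 = root_pt r.
Hypothesis x_valid : valid r x.
Hypothesis x_not_root : x <> root_pt r.
Hypothesis x_visits : visits tau x (#|D| + 1 - #|K|).

Lemma stays_below t1 t2 t : 0 <= t1 -> t1 <= t <= t2 -> t2 <= 1 ->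
  Defs.pre r par (tau t1) x -> Defs.pre r par (tau t2) x -> Defs.pre r par (tau t) x.
Proof.
move=> t1_ge0 t_mid t2_le1 below1 below2; apply: contrapT => above.
have outer_sep := outside_times_separated t1_ge0 t_mid t2_le1 below1 below2 above.
have [w w_spec] := branch_times.
have cD (c : {c | c \in D :\: K}) : val c \in D.
  by have := valP c; rewrite inE => /andP [].
have outer01 : forall k : 'I_3, 0 <= nth 0 [:: 0; t; 1] k <= 1.
  by apply: (forall_I3 (P := fun u => 0 <= u <= 1)); lra.
have outer_above : forall k : 'I_3, ~ Defs.pre r par (tau (nth 0 [:: 0; t; 1] k)) x.
  apply: (forall_I3 (P := fun u => ~ Defs.pre r par (tau u) x)) => //=;
  by rewrite ?tau0 ?tau1 => /(pre_root_l x_valid).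
pose q (i : 'I_3 + {c | c \in D :\: K}) :=
  match i with inl k => nth 0 [:: 0; t; 1] k | inr c => w c end.
have q_not_hit i : ~ hits (q i).
  case: i => [k | c] [_ tau_x].
    by apply: (outer_above k); rewrite tau_x; apply: pre_refl.
  have [_ _ _ x_out _] := x_decomp.
  by apply: (x_out _ (cD c)); rewrite -tau_x; exact: (w_spec c).2.
have q_sep i j : i != j -> exists2 u, hits u & between (q i) (q j) u.
  case: i j => [k | c] [k' | c'] ij /=.
  - by apply: outer_sep; apply: contra ij => /eqP ->.
  - have [u ? ?] := hits_branch_outside (cD c') (w_spec c').1 (outer01 k)
      (w_spec c').2 (outer_above k).
    by exists u => //; apply: between_sym.
  - exact: hits_branch_outside (cD c) (w_spec c).1 (outer01 k') (w_spec c).2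
      (outer_above k').
  - apply: hits_branches (cD c) (cD c') _ (w_spec c).1 (w_spec c').1
      (w_spec c).2 (w_spec c').2.
    by move=> /val_inj cc'; rewrite cc' eqxx in ij.
have KD : K \subset D by apply/subsetP => c; rewrite inE => /andP [].
have := card_separated_le x_visits q_not_hit q_sep.
rewrite card_sum card_ord card_sig cardsDS //.
have := subset_leq_card KD; lia.
Qed.

End VisitCounting.

Theorem lemma11 (V : finType) (r : V) (par : V -> V) (f : point V -> Rbar)
    (le : R -> point V -> point V -> Prop) (tau : R -> point V) :
  merge_tree r par f ->
  layer_order r par f le ->
  partial_in_order r par f le tau ->
  forall t1 t2 : R, (0 <= t1)%R -> (t1 <= t2)%R -> (t2 <= 1)%R ->
  forall x : point V, is_lca r par (tau t1) (tau t2) x ->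
  forall t : R, (t1 <= t <= t2)%R -> in_subtree r par x (tau t).
Proof.
move=> [par_root [vanc_root _]] _ [tau_valid [tau_cont [tau0 [tau1 [_ visits_deg]]]]].
move=> t1 t2 t1_ge0 t12 t2_le1 x [x_valid [below1 [below2 _]]] t t_between.
split; first by apply: tau_valid; lra.
case: (pselect (x = root_pt r)) => [-> | x_root].
  by apply: (pre_root vanc_root); apply: tau_valid; lra.
have [D [s [decomp deg_x unvisited]]] :=
  point_decomposition par_root vanc_root tau x_valid x_root.
have := visits_deg x _ x_valid unvisited; rewrite deg_x => x_visits.
exact: (stays_below tau_valid tau_cont decomp tau0 tau1 x_valid x_root x_visits
  t1_ge0 t_between t2_le1 below1 below2).
Qed.
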